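(* Let $P\subset\mathbb R^d$ be a $d$-polytope in general position, and let $P=P_1\cup\dots\cup P_k$ be a triangulation of $P$ into $d$-simplices whose vertices are all vertices of $P$ (the $P_i$ having pairwise intersections contained in their boundaries). Then for every $x\in\mathbb R^d$, $\mathbf 1_{\Omega(P)}(x)=\sum_{i=1}^k\mathbf 1_{\Omega(P_i)}(x)$. In particular $|\mathcal L(\Omega(P))|=\sum_{i=1}^k|\mathcal L(\Omega(P_i))|$.
   Context: For $k\ge1$, $\pi:\mathbb R^k\to\mathbb R^{k-1}$ forgets the last coordinate and $\pi^{(j)}$ forgets the last $j$ coordinates. For a compact $S\subset\mathbb R^k$ and $y\in\pi(S)$, $n(y,S)$ is the point of $S\cap\pi^{-1}(y)$ with smallest last coordinate, $NB(S)=\{n(y,S):y\in\pi(S)\}$, and $\Omega(S)=S\setminus NB(S)$; $\mathcal L(S)=S\cap\mathbb Z^k$; $\mathbf 1_A$ is the indicator function. A $d$-polytope $P$ with vertex set $V$ is in general position if for every $0\le k\le d-1$ and every $(k+1)$-subset $U\subset V$, $\pi^{(d-k)}(\mathrm{conv}(U))$ is a $k$-simplex. *)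

From HB Require Import structures.
From mathcomp Require Import all_boot all_order all_algebra.
From mathcomp Require Import all_classical all_reals all_analysis.
From mathcomp Require Import finmap.
Set Implicit Arguments. Unset Strict Implicit. Unset Printing Implicit Defensive.
Import Order.TTheory GRing.Theory Num.Theory.
Import numFieldNormedType.Exports.
Local Open Scope classical_set_scope.
Local Open Scope ring_scope.

Section Defs.
Variable R : realType.

Definition conv_seq m (s : seq 'rV[R]_m) : set 'rV[R]_m :=
  [set x | exists w : 'I_(size s) -> R,
     (forall i, 0 <= w i) /\ \sum_i w i = 1 /\
     x = \sum_i w i *: nth 0 s i].

Definition aff_indep m p (v : 'I_p -> 'rV[R]_m) : Prop :=
  forall c : 'I_p -> R, \sum_i c i = 0 -> \sum_i c i *: v i = 0 ->
    forall i, c i = 0.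

Definition is_simplex k (S : set 'rV[R]_k) : Prop :=
  exists v : 'I_k.+1 -> 'rV[R]_k,
    aff_indep v /\ S = conv_seq [seq v i | i <- enum 'I_k.+1].

(* Keep the first k coordinates of a point of R^d (for k <= d this is
   pi^(d-k), forgetting the last d-k coordinates). *)
Definition keep_first d k (x : 'rV[R]_d) : 'rV[R]_k :=
  \row_(i < k) (if (insub (val i) : option 'I_d) is Some j
                then x 0 j else 0).

Definition proj_last n (x : 'rV[R]_n.+1) : 'rV[R]_n :=
  \row_(i < n) x 0 (widen_ord (leqnSn n) i).

Definition last_coord n (x : 'rV[R]_n.+1) : R := x 0 ord_max.

Definition NB n (S : set 'rV[R]_n.+1) : set 'rV[R]_n.+1 :=
  [set x | S x /\ forall z, S z -> proj_last z = proj_last x ->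
                            last_coord x <= last_coord z].

Definition Omega n (S : set 'rV[R]_n.+1) : set 'rV[R]_n.+1 := S `\` NB S.

(* Lattice points L(S) = S ∩ Z^m, indexed by integer vectors. *)
Definition lattice m (S : set 'rV[R]_m) : set 'rV[int]_m :=
  [set z | S (map_mx (fun a : int => a%:~R) z)].

Definition boundary m (S : set 'rV[R]_m) : set 'rV[R]_m :=
  closure S `\` interior S.

Definition vertex_set m (V : seq 'rV[R]_m) : Prop :=
  uniq V /\ forall v, v \in V -> ~ conv_seq (rem v V) v.

Definition full_dim m (V : seq 'rV[R]_m) : Prop :=
  exists p : 'I_m.+1 -> 'rV[R]_m, (forall i, p i \in V) /\ aff_indep p.

Definition general_position d (V : seq 'rV[R]_d) : Prop :=
  forall k, (k < d)%N -> forall U : seq 'rV[R]_d,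
    uniq U -> size U = k.+1 -> {subset U <= V} ->
    is_simplex (keep_first k @` conv_seq U).

End Defs.

From HB Require Import structures.
From mathcomp Require Import all_boot all_order all_algebra.
From mathcomp Require Import all_classical all_reals all_analysis.
From mathcomp Require Import finmap.
From mathcomp Require Import ring lra zify.
Import Order.TTheory GRing.Theory Num.Theory.
Import numFieldNormedType.Exports.
Local Open Scope classical_set_scope.
Local Open Scope ring_scope.
Set Implicit Arguments. Unset Strict Implicit. Unset Printing Implicit Defensive.

(* A point x lies in Omega(S) iff S contains a point strictly below x on the
   vertical line through x.  Every Omega(P_i) is contained in Omega(P).
   Conversely, if x is in Omega(P), then points slightly below x still lie in P
   and, the finitely many simplices being closed, in some P_i that already
   contains x, so x is in Omega(P_i).  Finally x cannot lie in Omega(P_i) and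
   Omega(P_j) for i <> j: the vertical fibres of P_i and P_j through x then
   overlap below x, and halfway between x and that overlap lies a point of
   P_j that is interior to P_i, because general position forbids a vertical
   segment inside a facet of P_i.  This contradicts that P_i and P_j only meet
   on their boundaries.  Counting lattice points is summing the indicator
   identity over the finitely many integer points of Omega(P). *)

Section ConvexHull.
Variables (R : realType) (m : nat).
Implicit Types (x y z : 'rV[R]_m) (t : R).

Definition conv_fam p (v : 'I_p -> 'rV[R]_m) : set 'rV[R]_m :=
  [set x | exists w : 'I_p -> R,
     (forall i, 0 <= w i) /\ \sum_i w i = 1 /\ x = \sum_i w i *: v i].

Definition segment_closed (S : set 'rV[R]_m) :=
  forall x y t, S x -> S y -> 0 <= t <= 1 -> S ((1 - t) *: x + t *: y).

Lemma conv_seq_map p (v : 'I_p -> 'rV[R]_m) :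
  conv_seq [seq v i | i <- enum 'I_p] = conv_fam v.
Proof.
have e : size [seq v i | i <- enum 'I_p] = p by rewrite size_map size_enum_ord.
have cast_conv q (eq : q = p) (u : 'I_p -> 'rV[R]_m) :
    conv_fam (fun i : 'I_q => u (cast_ord eq i)) = conv_fam u.
  by subst; congr conv_fam; apply: funext => i; rewrite cast_ord_id.
rewrite -(cast_conv _ e); congr conv_fam; apply: funext => i.
rewrite (nth_map (cast_ord e i)); last by rewrite size_enum_ord (ltn_ord (cast_ord e i)).
by congr v; exact: (nth_ord_enum _ (cast_ord e i)).
Qed.

Lemma conv_fam_segment_closed p (v : 'I_p -> 'rV[R]_m) :
  segment_closed (conv_fam v).
Proof.
move=> _ _ t [a [a0 [a1 ->]]] [b [b0 [b1 ->]]] /andP[t0 t1].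
exists (fun i => (1 - t) * a i + t * b i); split.
  by move=> i; rewrite addr_ge0 // mulr_ge0 // subr_ge0.
split; first by rewrite big_split /= -!mulr_sumr a1 b1 !mulr1 subrK.
rewrite !scaler_sumr -big_split /=; apply: eq_bigr => i _.
by rewrite !scalerA scalerDl.
Qed.

Lemma conv_fam_vertex p (v : 'I_p -> 'rV[R]_m) i : conv_fam v (v i).
Proof.
exists (fun j => (j == i)%:R); split; first by move=> j; rewrite ler0n.
split; first by rewrite (bigD1 i) //= eqxx big1 ?addr0 // => j /negbTE ->.
by rewrite (bigD1 i) //= eqxx scale1r big1 ?addr0 // => j /negbTE ->; rewrite scale0r.
Qed.

Lemma conv_fam_bounded p (v : 'I_p -> 'rV[R]_m) :
  exists M, forall x, conv_fam v x -> forall j, `|x 0 j| <= M.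
Proof.
exists (\sum_l \sum_j `|v l 0 j|) => _ [w [w0 [w1 ->]]] j.
rewrite summxE (le_trans (ler_norm_sum _ _ _)) //; apply: ler_sum => l _.
have wl1 : w l <= 1 by rewrite -w1 (bigD1 l) //= lerDl sumr_ge0.
rewrite mxE normrM (ger0_norm (w0 l)); apply: (le_trans (y := `|v l 0 j|)).
  by rewrite -[X in _ <= X]mul1r ler_wpM2r.
by rewrite (bigD1 j) //= lerDl sumr_ge0.
Qed.

End ConvexHull.

(* The homogeneous coordinates [y, 1] turn affine combinations into linear
   ones, so affine independence of m.+1 points of R^m becomes invertibility of
   the matrix of their homogeneous coordinates. *)
Section Homogeneous.
Variables (R : realType) (m : nat).

Definition homog (y : 'rV[R]_m) : 'rV[R]_m.+1 :=
  \row_j (if unlift ord_max j is Some j' then y 0 j' else 1).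

Definition homog_mx p (r : 'I_p -> 'rV[R]_m) : 'M[R]_(p, m.+1) :=
  \matrix_(l, j) homog (r l) 0 j.

Lemma mul_row_homog_mx p (r : 'I_p -> 'rV[R]_m) (c : 'I_p -> R) :
  (\row_l c l) *m homog_mx r =
  \row_j (if unlift ord_max j is Some j' then (\sum_l c l *: r l) 0 j'
          else \sum_l c l).
Proof.
apply/rowP => j; rewrite !mxE; case: unliftP => [j'|] -> /=.
  by rewrite summxE; apply: eq_bigr => l _; rewrite !mxE liftK.
by apply: eq_bigr => l _; rewrite !mxE unlift_none mulr1.
Qed.

Lemma mul_row_homog_mx_comb p (r : 'I_p -> 'rV[R]_m) (c : 'I_p -> R) :
  \sum_l c l = 1 -> (\row_l c l) *m homog_mx r = homog (\sum_l c l *: r l).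
Proof.
move=> c1; rewrite mul_row_homog_mx; apply/rowP => j; rewrite !mxE.
by case: unliftP.
Qed.

Lemma mul_row_homog_mx_eq0 p (r : 'I_p -> 'rV[R]_m) (c : 'I_p -> R) :
  (\row_l c l) *m homog_mx r = 0 <-> \sum_l c l *: r l = 0 /\ \sum_l c l = 0.
Proof.
rewrite mul_row_homog_mx; split.
  move=> /rowP H; split; last by have := H ord_max; rewrite !mxE unlift_none.
  by apply/rowP => j; have := H (lift ord_max j); rewrite !mxE liftK.
move=> [/rowP H1 H2]; apply/rowP => j; rewrite !mxE.
by case: unliftP => [j'|] _ //; have := H1 j'; rewrite !mxE.
Qed.

Lemma homog_segment (y z : 'rV[R]_m) (t : R) :
  homog ((1 - t) *: y + t *: z) = (1 - t) *: homog y + t *: homog z.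
Proof.
apply/rowP => j; rewrite !mxE; case: unliftP => [j'|] _; first by rewrite !mxE.
by rewrite !mulr1 subrK.
Qed.

Lemma aff_indep_unitmx (r : 'I_m.+1 -> 'rV[R]_m) :
  aff_indep r <-> homog_mx r \in unitmx.
Proof.
have row_eta (v : 'rV[R]_m.+1) : v = \row_l v 0 l by apply/rowP => l; rewrite mxE.
split.
  move=> r_indep; rewrite unitmxE unitfE; apply/negP => /det0P [v /eqP vn0].
  rewrite [v]row_eta => /mul_row_homog_mx_eq0 [comb0 sum0]; apply: vn0.
  by apply/rowP => l; rewrite !mxE (r_indep _ sum0 comb0).
move=> r_unit c sum0 comb0 i.
have /(congr1 (mulmx^~ (invmx (homog_mx r)))) : (\row_l c l) *m homog_mx r = 0.
  exact/mul_row_homog_mx_eq0.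
by rewrite mulmxK // mul0mx => /rowP/(_ i); rewrite !mxE.
Qed.

Definition aff_form (v : 'rV[R]_m.+1) (y : 'rV[R]_m) : R := (homog y *m v^T) 0 0.

Lemma aff_form_comb p (r : 'I_p -> 'rV[R]_m) (c : 'I_p -> R) v :
  \sum_l c l = 1 -> aff_form v (\sum_l c l *: r l) = \sum_l c l * aff_form v (r l).
Proof.
move=> c1; rewrite /aff_form -mul_row_homog_mx_comb // -mulmxA mxE.
apply: eq_bigr => l _; rewrite mxE; congr (_ * _).
by rewrite !mxE; apply: eq_bigr => j _; rewrite !mxE.
Qed.

Lemma homog_mx_aff_form p (r : 'I_p -> 'rV[R]_m) v l :
  (homog_mx r *m v^T) l 0 = aff_form v (r l).
Proof. by rewrite /aff_form !mxE; apply: eq_bigr => j _; rewrite !mxE. Qed.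

Lemma aff_indepPn (r : 'I_m.+1 -> 'rV[R]_m) :
  ~ aff_indep r <-> exists2 v : 'rV[R]_m.+1, v != 0 & forall l, aff_form v (r l) = 0.
Proof.
split=> [|[v /eqP vn0 v0] /aff_indep_unitmx r_unit]; last first.
  apply: vn0; apply: trmx_inj; rewrite trmx0 -(mulKmx r_unit v^T).
  suff -> : homog_mx r *m v^T = 0 by rewrite mulmx0.
  by apply/matrixP => l j; rewrite ord1 homog_mx_aff_form v0 mxE.
rewrite aff_indep_unitmx unitmxE unitfE -det_tr => /negP; rewrite negbK.
move=> /det0P [v vn0 vr0]; exists v => // l.
by rewrite -homog_mx_aff_form -[_ *m _]trmxK trmx_mul trmxK vr0 !mxE.
Qed.

End Homogeneous.

Section Barycentric.
Variables (R : realType) (m : nat) (r : 'I_m.+1 -> 'rV[R]_m).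
Hypothesis r_indep : aff_indep r.

Definition bary (y : 'rV[R]_m) : 'rV[R]_m.+1 := homog y *m invmx (homog_mx r).

Let r_unit : homog_mx r \in unitmx. Proof. exact/aff_indep_unitmx. Qed.

Lemma bary_spec y : \sum_l bary y 0 l = 1 /\ \sum_l bary y 0 l *: r l = y.
Proof.
have /rowP y_homog : \row_l bary y 0 l *m homog_mx r = homog y.
  by rewrite -[X in X *m _](_ : bary y = _) ?mulmxKV //; apply/rowP => l; rewrite mxE.
rewrite mul_row_homog_mx in y_homog; split.
  by have := y_homog ord_max; rewrite !mxE unlift_none.
by apply/rowP => j; have := y_homog (lift ord_max j); rewrite !mxE liftK.
Qed.

Lemma bary_comb (w : 'I_m.+1 -> R) :
  \sum_l w l = 1 -> bary (\sum_l w l *: r l) = \row_l w l.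
Proof. by move=> w1; rewrite /bary -mul_row_homog_mx_comb // mulmxK. Qed.

Lemma conv_fam_bary y : conv_fam r y <-> forall l, 0 <= bary y 0 l.
Proof.
split; first by move=> [w [w0 [w1 ->]]] l; rewrite bary_comb // mxE.
by move=> y_ge0; have [s1 s2] := bary_spec y; exists (fun l => bary y 0 l).
Qed.

Lemma bary_segment y z (t : R) l :
  bary ((1 - t) *: y + t *: z) 0 l = (1 - t) * bary y 0 l + t * bary z 0 l.
Proof.
rewrite /bary homog_segment mulmxDl -!scalemxAl.
by rewrite [LHS]mxE [X in X + _]mxE [X in _ + X]mxE.
Qed.

Lemma bary_continuous l : continuous (fun y => bary y 0 l).
Proof.
have cont_sum (I : Type) (s : seq I) (g : I -> 'rV[R]_m -> R) :
    (forall i, continuous (g i)) -> continuous (fun y => \sum_(i <- s) g i y).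
  move=> gC; elim: s => [|a s IH].
    by under eq_fun do rewrite big_nil; exact: cst_continuous.
  under eq_fun do rewrite big_cons.
  by move=> x; exact: cvgD (gC a x) (IH x).
have -> : (fun y => bary y 0 l) = fun y => \sum_(j <- index_enum 'I_m.+1)
    ((if unlift ord_max j is Some j' then y 0 j' else 1) * invmx (homog_mx r) j l).
  by apply: funext => y; rewrite /bary mxE; apply: eq_bigr => j _; rewrite !mxE.
apply: cont_sum => j x; apply: (cvgMr_tmp (FF := nbhs_filter x)).
case: (unliftP ord_max j) => [j'|] _.
- exact: coord_continuous.
- exact: (@cst_continuous _ R^o 1 x).
Qed.

Lemma interior_bary_gt0 y : (forall l, 0 < bary y 0 l) -> interior (conv_fam r) y.
Proof.
move=> y_gt0; have : \forall z \near y, forall l, 0 < bary z 0 l.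
  apply: (@filter_forall _ _ (fun l z => 0 < bary z 0 l) _ (nbhs_filter y)) => l.
  have bary_cvg : (fun z => bary z 0 l) @ y --> bary y 0 l by exact: bary_continuous.
  exact: (@cvgr_gt _ _ (nbhs y) (nbhs_filter y) _ _ bary_cvg 0 (y_gt0 l)).
by apply: filterS => z z_gt0; apply/conv_fam_bary => l; exact/ltW.
Qed.

Lemma conv_fam_face y l : conv_fam r y -> bary y 0 l = 0 ->
  conv_fam (fun j : 'I_m => r (lift l j)) y.
Proof.
move=> /conv_fam_bary y_ge0 yl0; have [s1 s2] := bary_spec y.
exists (fun j => bary y 0 (lift l j)); split; first by move=> j; apply: y_ge0.
rewrite (bigD1_ord l) //= yl0 add0r in s1; split => //.
by rewrite (bigD1_ord l) //= yl0 scale0r add0r in s2.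
Qed.

End Barycentric.

Lemma aff_indep_inj (R : realType) m p (r : 'I_p -> 'rV[R]_m) :
  aff_indep r -> injective r.
Proof.
move=> r_indep a b rab; apply/eqP; apply: contraT => ab.
have delta (V : lmodType R) x (F : 'I_p -> V) : \sum_l (l == x)%:R *: F l = F x.
  by rewrite (bigD1 x) //= eqxx scale1r big1 ?addr0 // => l /negbTE ->; rewrite scale0r.
have delta1 (x : 'I_p) : \sum_l ((l == x)%:R : R) = 1.
  by rewrite (bigD1 x) //= eqxx big1 ?addr0 // => l /negbTE ->.
have := r_indep (fun l => (l == a)%:R - (l == b)%:R).
rewrite sumrB !delta1 subrr => /(_ erefl).
under eq_bigr do rewrite scalerBl.
rewrite sumrB !delta rab subrr => /(_ erefl a).
by rewrite eqxx (negbTE ab) subr0 => /eqP; rewrite oner_eq0.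
Qed.

Section VerticalProjection.
Variables (R : realType) (n : nat).
Implicit Types (x y z : 'rV[R]_n.+1) (t : R).

Lemma keep_first_proj_last x : keep_first n x = proj_last x.
Proof.
apply/rowP => i; have i_lt : (val i < n.+1)%N by exact: ltn_trans (ltn_ord i) (ltnSn n).
by rewrite !mxE insubT /=; congr (x 0 _); apply: val_inj.
Qed.

Lemma proj_last_sum p (c : 'I_p -> R) (v : 'I_p -> 'rV[R]_n.+1) :
  proj_last (\sum_l c l *: v l) = \sum_l c l *: proj_last (v l).
Proof. by apply/rowP => i; rewrite mxE !summxE; apply: eq_bigr => l _; rewrite !mxE. Qed.

Lemma proj_last_segment x z t :
  proj_last ((1 - t) *: x + t *: z) = (1 - t) *: proj_last x + t *: proj_last z.
Proof. by apply/rowP => i; rewrite !mxE. Qed.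

Lemma proj_last_vertical x z t :
  proj_last z = proj_last x -> proj_last ((1 - t) *: x + t *: z) = proj_last x.
Proof. by move=> pz; rewrite proj_last_segment pz -scalerDl subrK scale1r. Qed.

Lemma last_coord_segment x z t :
  last_coord ((1 - t) *: x + t *: z) = (1 - t) * last_coord x + t * last_coord z.
Proof. by rewrite /last_coord !mxE. Qed.

Lemma proj_last_coord_inj x z :
  proj_last x = proj_last z -> last_coord x = last_coord z -> x = z.
Proof.
move=> /rowP pxz lxz; apply/rowP => j; case: (unliftP ord_max j) => [j'|] ->.
  have -> : lift ord_max j' = widen_ord (leqnSn n) j'.
    by apply: val_inj => /=; rewrite /bump leqNgt ltn_ord.
  by have := pxz j'; rewrite !mxE.
exact: lxz.
Qed.

Lemma segment_closed_fibre (S : set 'rV[R]_n.+1) x z y :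
  segment_closed S -> S x -> S z ->
  proj_last z = proj_last x -> proj_last y = proj_last x ->
  last_coord z <= last_coord y <= last_coord x -> S y.
Proof.
move=> S_conv Sx Sz pz py /andP[zy yx].
have [zx|xz] := ltrP (last_coord z) (last_coord x); last first.
  suff -> : y = x by [].
  by apply: proj_last_coord_inj => //; apply/eqP; rewrite eq_le yx (le_trans xz).
pose t := (last_coord x - last_coord y) / (last_coord x - last_coord z).
have dxz : last_coord x - last_coord z != 0 by rewrite subr_eq0 gt_eqF.
have -> : y = (1 - t) *: x + t *: z.
  apply: proj_last_coord_inj; first by rewrite proj_last_vertical.
  by rewrite last_coord_segment /t; field.
apply: S_conv => //; apply/andP; split.
  by rewrite divr_ge0 // subr_ge0 // ltW.
by rewrite ler_pdivrMr ?subr_gt0 // mul1r lerD2l lerN2.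
Qed.

Lemma OmegaP (S : set 'rV[R]_n.+1) x : Omega S x <->
  S x /\ exists2 z, S z & proj_last z = proj_last x /\ last_coord z < last_coord x.
Proof.
split=> [[Sx xNB]|[Sx [z Sz [pz lz]]]]; last first.
  by split=> // -[_ /(_ z Sz pz)]; rewrite leNgt lz.
split=> //; apply: contrapT => below; apply: xNB; split=> // z Sz pz.
by rewrite leNgt; apply/negP => lz; apply: below; exists z.
Qed.

Lemma OmegaS (A B : set 'rV[R]_n.+1) x : A `<=` B -> Omega A x -> Omega B x.
Proof.
move=> AB /OmegaP[Ax [z Az zx]]; apply/OmegaP.
by split; [exact: AB | exists z; [exact: AB|]].
Qed.

Lemma Omega_common_below (A B : set 'rV[R]_n.+1) x :
  segment_closed A -> segment_closed B -> Omega A x -> Omega B x ->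
  exists2 z, A z /\ B z & proj_last z = proj_last x /\ last_coord z < last_coord x.
Proof.
move=> A_conv B_conv /OmegaP[Ax [a Aa [pa la]]] /OmegaP[Bx [b Bb [pb lb]]].
have [ab|ba] := lerP (last_coord a) (last_coord b).
  exists b => //; split=> //.
  by apply: (segment_closed_fibre A_conv Ax Aa); rewrite ?ab ?ltW.
exists a => //; split=> //.
by apply: (segment_closed_fibre B_conv Bx Bb); rewrite ?ltW.
Qed.

End VerticalProjection.

Section Triangulation.
Variables (R : realType) (n : nat) (V : seq 'rV[R]_n.+1).
Hypothesis V_gp : general_position V.

(* General position makes the projected vertices of a facet affinely
   independent: otherwise their hull, which is the projection of the facet,
   would lie in an affine hyperplane of R^n and could not be a simplex. *)
Lemma general_position_proj_inj (U : 'I_n.+1 -> 'rV[R]_n.+1) :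
  injective U -> (forall j, U j \in V) -> forall x u,
  conv_fam U x -> conv_fam U u -> proj_last x = proj_last u -> x = u.
Proof.
move=> U_inj UV _ _ [a [a0 [a1 ->]]] [b [b0 [b1 ->]]] pab.
have [w [w_indep w_hull]] : is_simplex (keep_first n @` conv_fam U).
  rewrite -conv_seq_map; apply: (V_gp (ltnSn n)).
  - by rewrite map_inj_uniq // enum_uniq.
  - by rewrite size_map size_enum_ord.
  - by move=> y /mapP [j _ ->].
rewrite conv_seq_map in w_hull.
have q_indep : aff_indep (fun j => proj_last (U j)).
  apply: contrapT => /aff_indepPn [v vn0 v0].
  apply: (proj2 (aff_indepPn w) _ w_indep); exists v => // l.
  have : (keep_first n @` conv_fam U) (w l) by rewrite w_hull; exact: conv_fam_vertex.
  case=> _ [c [_ [c1 ->]]] <-.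
  rewrite keep_first_proj_last proj_last_sum aff_form_comb //.
  by rewrite big1 // => j _; rewrite v0 mulr0.
have ab j : a j = b j.
  apply/eqP; rewrite -subr_eq0; apply/eqP; apply: (q_indep (fun j => a j - b j)).
    by rewrite sumrB a1 b1 subrr.
  under eq_bigr do rewrite scalerBl.
  by rewrite sumrB -!proj_last_sum pab subrr.
by apply: eq_bigr => j _; rewrite ab.
Qed.

(* If a barycentric coordinate vanished at both x and u, the vertical segment
   [x, u] would lie in a facet, which general position forbids. *)
Lemma conv_fam_vertical_interior (r : 'I_n.+2 -> 'rV[R]_n.+1) x u (t : R) :
  (forall j, r j \in V) -> aff_indep r -> conv_fam r x -> conv_fam r u ->
  proj_last u = proj_last x -> u != x -> 0 < t < 1 ->
  interior (conv_fam r) ((1 - t) *: x + t *: u).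
Proof.
move=> rV r_indep rx ru pu ux /andP[t0 t1]; apply: interior_bary_gt0 => // l.
rewrite bary_segment // ltNge; apply/negP => le0.
have ax := proj1 (conv_fam_bary r_indep x) rx l.
have au := proj1 (conv_fam_bary r_indep u) ru l.
have [x0 u0] : bary r x 0 l = 0 /\ bary r u 0 l = 0 by split; nra.
move/eqP: ux; apply; apply: (general_position_proj_inj _ _
  (conv_fam_face r_indep ru u0) (conv_fam_face r_indep rx x0) pu).
- by move=> i j /(aff_indep_inj r_indep)/lift_inj.
- by move=> j; exact: rV.
Qed.

Lemma Omega_simplices_interior (r s : 'I_n.+2 -> 'rV[R]_n.+1) x :
  (forall j, r j \in V) -> aff_indep r ->
  Omega (conv_fam r) x -> Omega (conv_fam s) x ->
  exists y, conv_fam s y /\ interior (conv_fam r) y.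
Proof.
move=> rV r_indep Orx Osx.
have [z [rz sz] [pz lz]] := Omega_common_below
  (conv_fam_segment_closed (v := r)) (conv_fam_segment_closed (v := s)) Orx Osx.
have half01 : 0 < (1 / 2 : R) < 1 by apply/andP; split; lra.
exists ((1 - 1 / 2) *: x + (1 / 2) *: z); split.
  by apply: (conv_fam_segment_closed Osx.1 sz); apply/andP; split; lra.
apply: conv_fam_vertical_interior Orx.1 rz pz _ half01 => //.
by apply/eqP => zx; move: lz; rewrite zx ltxx.
Qed.

End Triangulation.

Lemma conv_fam_near_outside (R : realType) m (r : 'I_m.+1 -> 'rV[R]_m) x z :
  aff_indep r -> ~ conv_fam r x ->
  \forall t \near 0^'+, ~ conv_fam r ((1 - t) *: x + t *: z).
Proof.
move=> r_indep rNx.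
have [l xl] : exists l, bary r x 0 l < 0.
  apply: contrapT => bary_ge0; apply: rNx; apply/(conv_fam_bary r_indep) => l.
  by rewrite leNgt; apply/negP => lt0; apply: bary_ge0; exists l.
set g := bary r x 0 l; set h := bary r z 0 l.
have d_gt0 : 0 < 2 * (`|h| - g) by rewrite mulr_gt0 // subr_gt0 (lt_le_trans xl).
have e_gt0 : 0 < - g / (2 * (`|h| - g)) by rewrite divr_gt0 // oppr_gt0.
near=> t.
have t_gt0 : 0 < t by near: t; exact: nbhs_right_gt.
have : t < - g / (2 * (`|h| - g)) by near: t; exact: nbhs_right_lt.
rewrite ltr_pdivlMr // => t_small.
move/(conv_fam_bary r_indep)/(_ l); rewrite bary_segment // -/g -/h.
by have := ler_norm h; nra.
Unshelve. all: by end_near.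
Qed.

Lemma Omega_union_exists (R : realType) n (P : set 'rV[R]_n.+1) k
    (T : 'I_k -> 'I_n.+2 -> 'rV[R]_n.+1) x :
  segment_closed P -> P = \bigcup_(i in [set: 'I_k]) conv_fam (T i) ->
  (forall i, aff_indep (T i)) ->
  Omega P x -> exists i, Omega (conv_fam (T i)) x.
Proof.
move=> P_conv PT T_indep /OmegaP[Px [z Pz [pz lz]]].
have out : \forall t \near 0^'+, forall i,
    ~ conv_fam (T i) x -> ~ conv_fam (T i) ((1 - t) *: x + t *: z).
  apply: filter_forall => i; have [Tx|TNx] := pselect (conv_fam (T i) x).
    by apply: nearW => t /(_ Tx).
  by apply: filterS (conv_fam_near_outside z (T_indep i) TNx) => t ? _.
have [t [t_gt0 t_lt1 tout]] : exists t : R, [/\ 0 < t, t < 1 &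
    forall i, ~ conv_fam (T i) x -> ~ conv_fam (T i) ((1 - t) *: x + t *: z)].
  near (0 : R)^'+ => t; exists t; split; near: t.
  - exact: nbhs_right_gt.
  - exact: nbhs_right_lt ltr01.
  - exact: out.
have : P ((1 - t) *: x + t *: z) by apply: P_conv; rewrite ?ltW.
rewrite PT => -[i _ Ty]; exists i; apply/OmegaP; split.
  by apply: contrapT => /tout; apply.
exists ((1 - t) *: x + t *: z) => //; split; first exact: proj_last_vertical.
by rewrite last_coord_segment; nra.
Unshelve. all: by end_near.
Qed.

Lemma indic_partition (T : Type) (R : pzRingType) (I : finType) (A : set T)
    (B : I -> set T) x :
  (A x <-> exists i, B i x) -> (forall i j, B i x -> B j x -> i = j) ->
  \1_A x = \sum_i \1_(B i) x :> R.
Proof.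
move=> AB B_uniq; have [[i Bix]|NB] := pselect (exists i, B i x).
  rewrite indicE mem_set; last by apply/AB; exists i.
  rewrite (bigD1 i) //= indicE mem_set // big1 ?addr0 // => j ji.
  by rewrite indicE memNset // => Bjx; move: ji; rewrite (B_uniq _ _ Bjx Bix) eqxx.
rewrite indicE memNset => [|/AB//]; rewrite big1 // => i _.
by rewrite indicE memNset // => Bix; apply: NB; exists i.
Qed.

Lemma indic_Omega_triangulation (R : realType) n (V : seq 'rV[R]_n.+1) k
    (T : 'I_k -> 'I_n.+2 -> 'rV[R]_n.+1) :
  general_position V -> (forall i j, T i j \in V) -> (forall i, aff_indep (T i)) ->
  conv_seq V = \bigcup_(i in [set: 'I_k]) conv_fam (T i) ->
  (forall i j, i != j ->
     conv_fam (T i) `&` conv_fam (T j) `<=` boundary (conv_fam (T i))) ->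
  forall x, \1_(Omega (conv_seq V)) x = \sum_i \1_(Omega (conv_fam (T i))) x :> R.
Proof.
move=> V_gp TV T_indep VT T_bd x; apply: indic_partition.
  split; last by case=> i; apply: OmegaS; rewrite VT => y Ty; exists i.
  apply: Omega_union_exists VT T_indep.
  exact: (conv_fam_segment_closed (v := fun i : 'I_(size V) => nth 0 V i)).
move=> i j Oi Oj; apply: contrapT => /eqP ij.
have [y [Tjy Tiy]] := Omega_simplices_interior V_gp (TV i) (T_indep i) Oi Oj.
by have [_] := T_bd i j ij y (conj (interior_subset Tiy) Tjy).
Qed.

Lemma bounded_lattice_finite (R : realType) m (S : set 'rV[R]_m) M :
  (forall x, S x -> forall j, `|x 0 j| <= M) -> finite_set (lattice S).
Proof.
move=> S_bd; have [N MN] : exists N : nat, M < N%:R.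
  exists (Num.Def.archi_bound (Num.max M 0)).
  by apply: le_lt_trans (archi_boundP _); rewrite ?le_max ?lexx ?orbT.
(* Lattice points with coordinates in (-N, N) are shifts of vectors over
   'I_(2N+1). *)
pose f (u : 'rV['I_(N.*2).+1]_m) : 'rV[int]_m := \row_j ((u 0 j : nat)%:Z - N%:Z).
apply: (sub_finite_set (B := f @` setT)); last exact: finite_image finite_finset.
move=> z Sz; exists (\row_j inord (absz (z 0 j + N%:Z))) => //.
apply/rowP => j; rewrite !mxE.
have : `|z 0 j| < N%:Z.
  rewrite -(ltr_int R) intr_norm; apply: le_lt_trans MN.
  by have := S_bd _ Sz j; rewrite mxE.
rewrite ltr_norml => /andP[zj_lb zj_ub]; have zjN : 0 <= z 0 j + N%:Z by lia.
by rewrite inordK ?gez0_abs ?addrK // -ltz_nat gez0_abs //; lia.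
Qed.

Lemma card_fset_set_sum (T : choiceType) k (A : set T) (B : 'I_k -> set T) :
  finite_set A ->
  (forall z, ((z \in A) : nat) = \sum_(i < k) ((z \in B i) : nat))%N ->
  #|` fset_set A| = (\sum_(i < k) #|` fset_set (B i)|)%N.
Proof.
move=> A_fin AB.
have BA i : B i `<=` A.
  move=> z Bz; apply: set_mem; have := AB z.
  by rewrite (bigD1 i) //= (mem_set Bz); case: (z \in A); rewrite // add1n.
have B_card i : #|` fset_set (B i)| = (\sum_(z <- fset_set A) ((z \in B i) : nat))%N.
  have B_fin : finite_set (B i) by exact: sub_finite_set (BA i) A_fin.
  rewrite card_fset_sum1 (eq_big_seq (fun z => ((z \in B i) : nat))).
    apply: big_fset_incl; first by rewrite -fset_set_sub.
    by move=> z _; rewrite in_fset_set // => /negbTE ->.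
  by move=> z; rewrite in_fset_set // => ->.
under eq_bigr do rewrite B_card.
rewrite exchange_big /= card_fset_sum1; apply: eq_big_seq => z.
by rewrite in_fset_set // -AB => ->.
Qed.

Lemma in_lattice (R : realType) m (S : set 'rV[R]_m) z :
  (z \in lattice S) = (map_mx (fun a : int => a%:~R) z \in S).
Proof. by apply/idP/idP => /set_mem; exact: mem_set. Qed.

Theorem mainTheorem5 (R : realType) (n : nat) (V : seq 'rV[R]_n.+1)
  (k : nat) (T : 'I_k -> 'I_n.+2 -> 'rV[R]_n.+1) :
  vertex_set V -> full_dim V -> general_position V ->
  (forall i j, T i j \in V) ->
  (forall i, aff_indep (T i)) ->
  conv_seq V = \bigcup_(i in [set: 'I_k])
                 conv_seq [seq T i j | j <- enum 'I_n.+2] ->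
  (forall i j : 'I_k, i != j ->
     conv_seq [seq T i l | l <- enum 'I_n.+2] `&`
     conv_seq [seq T j l | l <- enum 'I_n.+2] `<=`
     boundary (conv_seq [seq T i l | l <- enum 'I_n.+2]) `&`
     boundary (conv_seq [seq T j l | l <- enum 'I_n.+2])) ->
  (forall x : 'rV[R]_n.+1,
     \1_(Omega (conv_seq V)) x =
     \sum_(i < k) \1_(Omega (conv_seq [seq T i l | l <- enum 'I_n.+2])) x :> R)
  /\ (finite_set (lattice (Omega (conv_seq V))) /\
      (forall i, finite_set
         (lattice (Omega (conv_seq [seq T i l | l <- enum 'I_n.+2])))) /\
      #|` fset_set (lattice (Omega (conv_seq V))) | =
      (\sum_(i < k) #|` fset_set
         (lattice (Omega (conv_seq [seq T i l | l <- enum 'I_n.+2]))) |)%N).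
Proof.
move=> _ _ V_gp TV T_indep VT T_bd.
have hullE i : conv_seq [seq T i l | l <- enum 'I_n.+2] = conv_fam (T i).
  exact: conv_seq_map.
have indic_eq x : \1_(Omega (conv_seq V)) x =
    \sum_(i < k) \1_(Omega (conv_seq [seq T i l | l <- enum 'I_n.+2])) x :> R.
  under eq_bigr do rewrite hullE.
  apply: indic_Omega_triangulation V_gp TV T_indep _ _ x.
    by rewrite VT; apply: eq_bigcupr => i _; exact: hullE.
  by move=> i j ij y; rewrite -!hullE => /(T_bd i j ij) [].
have [M V_bd] := conv_fam_bounded (fun i : 'I_(size V) => nth 0 V i).
have Omega_fin S : S `<=` conv_seq V -> finite_set (lattice (Omega S)).
  by move=> SV; apply: (bounded_lattice_finite (M := M)) => x [/SV Vx _]; exact: V_bd.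
split=> //; split; first exact: Omega_fin.
split=> [i|]; first by apply: Omega_fin; rewrite VT => y Ty; exists i.
apply: card_fset_set_sum; first exact: Omega_fin.
move=> z; have := indic_eq (map_mx (fun a : int => a%:~R) z).
rewrite !indicE -natr_sum => /eqP; rewrite eqr_nat => /eqP ->.
by apply: eq_bigr => i _; rewrite in_lattice.
Qed.
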